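(* Let $P$ be a finite poset with height function $h$. Then $\mathsf{Z}_{P,h}([1]_q)=\chi_P$, where $\chi_P=\sum_{k\ge1}(-1)^{k-1}\#\operatorname{Ch}_k(P)$ is the Euler characteristic of the order complex of $P$. In particular, if $P$ has a unique minimum or a unique maximum, then $\mathsf{Z}_{P,h}([1]_q)=1$.
   Context: $q$ is an indeterminate; $[n]_q=(q^n-1)/(q-1)$ (so $[1]_q=1$). A height function is $h:P\to\mathbb{N}$ with $h(x)<h(y)$ whenever $y$ covers $x$. $\operatorname{Ch}_k(P)$ is the set of strict chains $c_1<\cdots<c_k$ in $P$. For a tuple $a=(a_1,\dots,a_k)$ of distinct nonnegative integers, $\mathsf{E}_a\in\mathbb{Q}(q)[x]$ is the unique polynomial with $\mathsf{E}_a([n]_q)=\sum_{m\in\mathbb{N}^k,\sum m_i=n}q^{\sum a_im_i}$ for all $n\ge0$. The $q$-Zeta polynomial is $\mathsf{Z}_{P,h}(x)=\sum_{k\ge1}\sum_{c\in\operatorname{Ch}_k(P)}q^{\sum_i h(c_i)}\mathsf{E}_{(h(c_1),\dots,h(c_k))}((x-[k+1]_q)/q^{k+1})$; it is the unique polynomial with $\mathsf{Z}_{P,h}([n]_q)=\sum_{e_1\le\cdots\le e_{n-1}}q^{\sum_j h(e_j)}$ for all $n\ge2$. *)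

From HB Require Import structures.
From mathcomp Require Import all_boot all_order all_algebra.
From mathcomp Require Import fraction.
From Stdlib Require Import ClassicalEpsilon.
Set Implicit Arguments. Unset Strict Implicit. Unset Printing Implicit Defensive.
Import Order.TTheory GRing.Theory Num.Theory.
Local Open Scope ring_scope.

Definition Qq : fieldType := {fraction {poly rat}}.
Definition qq : Qq := tofrac 'X.

Definition qint (n : nat) : Qq := (qq ^+ n - 1) / (qq - 1).

Definition Esum (a : seq nat) (n : nat) : Qq :=
  \sum_(m : {ffun 'I_(size a) -> 'I_n.+1} | (\sum_(i < size a) (m i : nat))%N == n)
     qq ^+ (\sum_(i < size a) nth 0%N a i * m i)%N.

(* E_a : the (unique) polynomial with E_a([n]_q) = Esum a n for all n >= 0
   (chosen by Hilbert's epsilon; 0 if no such polynomial exists). *)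
Definition Epoly (a : seq nat) : {poly Qq} :=
  epsilon (inhabits 0) (fun p : {poly Qq} => forall n : nat, p.[qint n] = Esum a n).

Section Poset.
Context {d : Order.disp_t} {P : finPOrderType d}.

Definition covers (x y : P) : bool :=
  ((x < y)%O && [forall z : P, ~~ ((x < z)%O && (z < y)%O)]).

Definition is_height (h : P -> nat) : Prop :=
  forall x y : P, covers x y -> (h x < h y)%N.

Definition Ch (k : nat) : {set k.-tuple P} :=
  [set c : k.-tuple P | sorted (fun x y : P => (x < y)%O) c].

(* q-Zeta polynomial; chains have length at most #|P|, so k ranges over 1..#|P| *)
Definition Zq (h : P -> nat) : {poly Qq} :=
  \sum_(1 <= k < #|P|.+1) \sum_(c in Ch k)
     (qq ^+ (\sum_(x <- c) h x)%N)%:P *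
     (Epoly (map h c) \Po (('X - (qint k.+1)%:P) * ((qq ^+ k.+1)^-1)%:P)).

Definition chi : int :=
  \sum_(1 <= k < #|P|.+1) (-1) ^+ k.-1 * (#|Ch k|%:Z).

End Poset.

From HB Require Import structures.
From mathcomp Require Import all_boot all_order all_algebra.
From mathcomp Require Import fraction ring.
From Stdlib Require Import ClassicalEpsilon.
Set Implicit Arguments. Unset Strict Implicit. Unset Printing Implicit Defensive.
Import Order.TTheory GRing.Theory Num.Theory.
Local Open Scope ring_scope.

(* The generating function of n |-> E_a([n]_q) is prod_i 1/(1 - q^(a_i) t); when the a_i are
   distinct, its partial fraction expansion gives E_a([n]_q) = C(q^n) for a polynomial C, so
   E_a = C(1 + (q - 1) x).  The argument of E_a in the k-th term of Z_{P,h}, taken at [1]_q, is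
   [-k]_q, and the reciprocity C(q^-j) = 0 for 0 < j < k, C(q^-k) = (-1)^(k-1) q^-(sum a)
   follows by adjoining one factor at a time.  Heights increase strictly along chains, so each
   chain with k elements contributes (-1)^(k-1), and the sum is chi_P.  If P has a least element
   m, the chains through m are m followed by a chain avoiding m, so the alternating sum
   telescopes to 1; a greatest element is a least element of the dual poset. *)

Lemma qq_neq0 : qq != 0.
Proof. by rewrite tofrac_eq0 polyX_eq0. Qed.

Lemma expq_neq0 n : qq ^+ n != 0.
Proof. by rewrite expf_neq0 // qq_neq0. Qed.

Lemma expq_inj : injective (GRing.exp qq).
Proof.
move=> m n; rewrite /qq -!rmorphXn => /eqP; rewrite tofrac_eq => /eqP.
by move=> /(congr1 (fun p : {poly rat} => size p)); rewrite !size_polyXn => -[].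
Qed.

Lemma subq1_neq0 : qq - 1 != 0.
Proof. by rewrite subr_eq0 -[qq]expr1 -(expr0 qq); apply/eqP => /expq_inj. Qed.

Lemma mulq1_qint n : (qq - 1) * qint n = qq ^+ n - 1.
Proof. by rewrite mulrC divfK ?subq1_neq0. Qed.

Definition qpow : {poly Qq} := 1 + (qq - 1)%:P * 'X.

Lemma horner_qpow x : qpow.[x] = 1 + (qq - 1) * x.
Proof. by rewrite /qpow hornerD hornerC hornerCM hornerX. Qed.

Lemma qpow_qint n : qpow.[qint n] = qq ^+ n.
Proof. by rewrite horner_qpow mulq1_qint addrC subrK. Qed.

Lemma qint_inj : injective qint.
Proof. by move=> m n /(congr1 (horner qpow)); rewrite !qpow_qint => /expq_inj. Qed.

Lemma poly_qint_inj (p r : {poly Qq}) : (forall n, p.[qint n] = r.[qint n]) -> p = r.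
Proof.
move=> pr; apply/eqP; rewrite -subr_eq0; apply: contraT => nz.
have := max_poly_roots nz (rs := map qint (iota 0 (size (p - r)))).
rewrite size_map size_iota ltnn; apply.
- by apply/allP => _ /mapP [n _ ->]; rewrite /root hornerD hornerN pr subrr.
- by rewrite map_inj_uniq ?iota_uniq //; apply: qint_inj.
Qed.

Lemma EpolyP a (p : {poly Qq}) : (forall n, p.[qint n] = Esum a n) -> Epoly a = p.
Proof.
move=> pE; apply: poly_qint_inj => n; rewrite pE.
exact: (epsilon_spec (inhabits 0) (fun p => forall n, p.[qint n] = Esum a n) (ex_intro _ p pE)).
Qed.

Section FfunCons.
Variables (T : finType) (k : nat).

Definition ffun_cons (t : T) (g : {ffun 'I_k -> T}) : {ffun 'I_k.+1 -> T} :=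
  [ffun i => if unlift ord0 i is Some j then g j else t].

Lemma ffun_cons0 t g : ffun_cons t g ord0 = t.
Proof. by rewrite ffunE unlift_none. Qed.

Lemma ffun_consS t g i : ffun_cons t g (lift ord0 i) = g i.
Proof. by rewrite ffunE liftK. Qed.

Lemma sum_ffun_cons (R : nmodType) (P : pred {ffun 'I_k.+1 -> T})
    (F : {ffun 'I_k.+1 -> T} -> R) :
  \sum_(f | P f) F f = \sum_t \sum_(g | P (ffun_cons t g)) F (ffun_cons t g).
Proof.
rewrite pair_big_dep (reindex (fun p => ffun_cons p.1 p.2)) //=.
exists (fun f => (f ord0, [ffun i => f (lift ord0 i)])) => [[t g] _ | f _] /=.
  by rewrite ffun_cons0; congr pair; apply/ffunP => i; rewrite ffunE ffun_consS.
by apply/ffunP => i; rewrite ffunE; case: unliftP => [j|] ->; rewrite ?ffunE.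
Qed.

End FfunCons.

(* Esum a n = EsumN a n n; a bound N on the parts independent of n lets the recursion on a
   go through. *)
Definition EsumN (a : seq nat) (N n : nat) : Qq :=
  \sum_(m : {ffun 'I_(size a) -> 'I_N.+1} | (\sum_(i < size a) (m i : nat))%N == n)
     qq ^+ (\sum_(i < size a) nth 0%N a i * m i)%N.

Fixpoint Esum_rec (a : seq nat) (n : nat) : Qq :=
  if a is x :: a' then \sum_(j < n.+1) qq ^+ (x * j) * Esum_rec a' (n - j)
  else (n == 0)%:R.

Lemma EsumN_rec a N n : (n <= N)%N -> EsumN a N n = Esum_rec a n.
Proof.
elim: a n => [|x a IHa] n le_nN; rewrite /EsumN /=.
  under eq_bigl => m do rewrite big_ord0.
  under eq_bigr => m _ do rewrite big_ord0.
  case: n le_nN => [|n] _; last exact: big_pred0.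
  by rewrite sumr_const card_ffun !card_ord.
rewrite sum_ffun_cons (big_ord_widen N.+1 (fun j => qq ^+ (x * j) * Esum_rec a (n - j))) //.
rewrite [RHS]big_mkcond /=; apply: eq_bigr => j _.
under eq_bigl => g do rewrite big_ord_recl ffun_cons0.
under eq_bigr => g _ do rewrite big_ord_recl ffun_cons0 exprD.
have [le_jn | lt_nj] := leqP j n; last first.
  by rewrite ltnS leqNgt lt_nj big_pred0 // => g; rewrite gtn_eqF ?ltn_addr.
rewrite -mulr_sumr -IHa; last by rewrite (leq_trans (leq_subr _ _)).
rewrite ltnS le_jn; congr (_ * _); apply: eq_big => [g|g _].
  under eq_bigr => i _ do rewrite ffun_consS.
  by apply/eqP/eqP => [<-|->]; rewrite ?addKn ?subnKC.
by under eq_bigr => i _ do rewrite ffun_consS.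
Qed.

Lemma EsumE a n : Esum a n = Esum_rec a n.
Proof. exact: EsumN_rec. Qed.

Lemma Esum0 a : Esum a 0 = 1.
Proof.
rewrite EsumE; elim: a => [|x a IHa] //=.
by rewrite big_ord1 muln0 expr0 mul1r.
Qed.

Lemma Esum_consS x a n : Esum (x :: a) n.+1 = Esum a n.+1 + qq ^+ x * Esum (x :: a) n.
Proof.
rewrite !EsumE /= big_ord_recl muln0 expr0 mul1r subn0; congr (_ + _).
by rewrite mulr_sumr; apply: eq_bigr => j _; rewrite subSS mulnS exprD mulrA.
Qed.

(* Partial fractions: D`_e = C`_e q^e / (q^e - q^x) for e <> x, and the free coefficient
   D`_x normalises D.[1]. *)
Lemma qshift_solve (C : {poly Qq}) x : C`_x = 0 ->
  exists D : {poly Qq},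
    [/\ D.[1] = 1, forall e, e != x -> C`_e = 0 -> D`_e = 0
      & forall y, D.[qq * y] = C.[qq * y] + qq ^+ x * D.[y]].
Proof.
move=> Cx0; pose N := maxn (size C) x.+1.
pose c e := C`_e * qq ^+ e / (qq ^+ e - qq ^+ x).
have cE e : c e * (qq ^+ e - qq ^+ x) = C`_e * qq ^+ e.
  have [-> | neq_ex] := eqVneq e x; first by rewrite /c Cx0 !mul0r.
  by rewrite divfK // subr_eq0; apply: contra neq_ex => /eqP /expq_inj ->.
pose D := \poly_(e < N) (c e + (e == x)%:R * (1 - \sum_(i < N) c i)).
have x_lt_N : (x < N)%N by rewrite leq_max leqnn orbT.
have sum_delta (K : Qq) : \sum_(e < N) ((e : nat) == x)%:R * K = K.
  under eq_bigr => e _ do rewrite mulr_natl mulrb.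
  by rewrite -big_mkcond big_ord1_eq x_lt_N.
exists D; split.
- rewrite horner_poly; under eq_bigr => e _ do rewrite expr1n mulr1.
  by rewrite big_split /= sum_delta addrC subrK.
- move=> e neq_ex Ce0; rewrite coef_poly (negbTE neq_ex) mul0r addr0 /c Ce0 !mul0r.
  by case: ifP.
- move=> y; rewrite !horner_poly (horner_coef_wide _ (leq_maxl (size C) x.+1)).
  rewrite mulr_sumr -big_split /=; apply: eq_bigr => e _.
  case: e => e /= _; rewrite exprMn; have [-> | neq_ex] := eqVneq e x.
    by rewrite Cx0 mul0r add0r mulrCA.
  by rewrite mul0r addr0 (mulrA (C`_e)) -cE; ring.
Qed.

(* E_a([-j]_q) for j <= size a; note [-j]_q = (q^-j - 1) / (q - 1). *)
Definition Erecip (a : seq nat) (j : nat) : Qq :=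
  (j == 0)%:R - (-1) ^+ size a * qq^-1 ^+ sumn a * (j == size a)%:R.

Section QShift.
Variables (x : nat) (a : seq nat) (C D : {poly Qq}).
Hypotheses (D1 : D.[1] = 1) (D_qshift : forall y, D.[qq * y] = C.[qq * y] + qq ^+ x * D.[y]).

Lemma qshift_Esum : (forall n, C.[qq ^+ n.+1] = Esum a n.+1) ->
  forall n, D.[qq ^+ n] = Esum (x :: a) n.
Proof.
move=> CE; elim=> [|n IHn]; first by rewrite expr0 D1 Esum0.
by rewrite exprS D_qshift -exprS CE IHn Esum_consS.
Qed.

Lemma qshift_Erecip : (forall j, (j <= size a)%N -> C.[qq^-1 ^+ j] = Erecip a j) ->
  forall j, (j <= (size a).+1)%N -> D.[qq^-1 ^+ j] = Erecip (x :: a) j.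
Proof.
move=> CE; elim=> [|j IHj] le_j; first by rewrite expr0 D1 /Erecip /= mulr0 subr0.
have qy : qq * qq^-1 ^+ j.+1 = qq^-1 ^+ j.
  by rewrite exprS mulrA mulfV ?qq_neq0 ?mul1r.
have step : qq ^+ x * D.[qq^-1 ^+ j.+1] = Erecip (x :: a) j - Erecip a j.
  by rewrite -IHj ?(ltnW le_j) -?CE // -qy D_qshift addrC addKr.
apply: (mulfI (expq_neq0 x)); rewrite step /Erecip /= eqSS (ltn_eqF le_j).
rewrite mulr0 subr0 opprB addrC subrK exprD exprS sub0r.
have qxK : qq ^+ x * qq^-1 ^+ x = 1 by rewrite -exprMn mulfV ?qq_neq0 ?expr1n.
rewrite [RHS](_ : _ = qq ^+ x * qq^-1 ^+ x *
  ((-1) ^+ size a * qq^-1 ^+ sumn a * (j == size a)%:R)); first by rewrite qxK mul1r.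
by ring.
Qed.
End QShift.

Definition Esum_qpoly (a : seq nat) (C : {poly Qq}) :=
  [/\ forall e, e \notin a -> C`_e = 0,
      forall n, C.[qq ^+ n.+1] = Esum a n.+1
    & forall j, (j <= size a)%N -> C.[qq^-1 ^+ j] = Erecip a j].

Lemma Esum_qpoly_exists a : uniq a -> exists C, Esum_qpoly a C.
Proof.
elim: a => [_|x a IHa /= /andP [x_notin_a /IHa [C [C0 CE CR]]]].
  exists 0; split=> [e _|n|j]; rewrite ?coef0 ?horner0 ?EsumE //.
  by rewrite leqn0 => /eqP ->; rewrite /Erecip /= !mul1r subrr.
have [D [D1 D0 D_qshift]] := qshift_solve (C0 _ x_notin_a).
exists D; split.
- move=> e; rewrite in_cons negb_or => /andP [neq_ex e_notin_a].
  exact: D0 neq_ex (C0 _ e_notin_a).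
- by move=> n; apply: qshift_Esum.
- exact: qshift_Erecip.
Qed.

Lemma Epoly_qpoly a C : Esum_qpoly a C -> a != [::] -> Epoly a = C \Po qpow.
Proof.
move=> [_ CE CR] a_neq0; apply: EpolyP => -[|n]; rewrite horner_comp qpow_qint //.
have -> : qq ^+ 0 = qq^-1 ^+ 0 by rewrite !expr0.
rewrite Esum0 CR // /Erecip.
by move: a_neq0; rewrite -size_eq0 eq_sym => /negbTE ->; rewrite mulr0 subr0.
Qed.

Lemma qpow_Zq_arg k :
  qpow.[(('X - (qint k.+1)%:P) * ((qq ^+ k.+1)^-1)%:P).[qint 1]] = qq^-1 ^+ k.
Proof.
rewrite hornerM hornerXsubC hornerC horner_qpow mulrA mulrBr !mulq1_qint expr1.
rewrite opprB addrA subrK mulrBl mulfV ?expq_neq0 // addrC subrK exprS invfM mulrA.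
by rewrite mulfV ?qq_neq0 ?mul1r ?exprVn.
Qed.

Lemma Epoly_Zq_term a : uniq a -> a != [::] ->
  qq ^+ sumn a *
    (Epoly a \Po (('X - (qint (size a).+1)%:P) * ((qq ^+ (size a).+1)^-1)%:P)).[qint 1]
  = (-1) ^+ (size a).-1.
Proof.
move=> a_uniq a_neq0; have [C CE] := Esum_qpoly_exists a_uniq.
rewrite (Epoly_qpoly CE a_neq0) !horner_comp qpow_Zq_arg.
case: CE => _ _ ->; rewrite // /Erecip eqxx mulr1.
move: a_neq0; rewrite -size_eq0; case: (size a) => [|k] //= _.
rewrite sub0r exprS mulN1r !mulNr opprK mulrCA -exprMn mulfV ?qq_neq0 //.
by rewrite expr1n mulr1.
Qed.

Lemma sum_alternating_telescope (A : nat -> int) N :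
  \sum_(1 <= k < N.+1) (-1) ^+ k.-1 * (A k + A k.-1) = A 0%N - (-1) ^+ N * A N.
Proof.
elim: N => [|N IHN]; first by rewrite big_geq // expr0 mul1r subrr.
by rewrite big_nat_recr //= IHN exprS; ring.
Qed.

Section Poset.
Variables (d : Order.disp_t) (P : finPOrderType d).

Lemma is_height_homo (h : P -> nat) :
  is_height h -> {homo h : x y / (x < y)%O >-> (x < y)%N}.
Proof.
move=> h_height; suff hn n x y : (#|[set z | (x < z < y)%O]| < n)%N ->
    (x < y)%O -> (h x < h y)%N by move=> x y; apply: hn.
elim: n x y => // n IHn x y lt_n lt_xy.
have [|] := boolP (covers x y); first exact: h_height.
rewrite /covers lt_xy /= => /forallPn [z]; rewrite negbK => /andP [lt_xz lt_zy].
have shrink u v : (x <= u)%O -> (v <= y)%O -> z \notin [set w | (u < w < v)%O] ->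
    (#|[set w | (u < w < v)%O]| < n)%N.
  move=> le_xu le_vy z_notin; rewrite -ltnS (leq_trans _ lt_n) // ltnS; apply: proper_card.
  apply/properP; split; last by exists z => //; rewrite inE lt_xz.
  apply/subsetP => w; rewrite !inE => /andP [lt_uw lt_wv].
  by rewrite (le_lt_trans le_xu lt_uw) (lt_le_trans lt_wv le_vy).
apply: (@ltn_trans (h z)).
  by apply: IHn lt_xz; apply: shrink; rewrite ?inE ?ltxx ?andbF ?(ltW lt_zy).
by apply: IHn lt_zy; apply: shrink; rewrite ?inE ?ltxx ?(ltW lt_xz).
Qed.

Lemma card_Ch_dual k : #|@Ch _ P^d k| = #|@Ch _ P k|.
Proof.
have rev_inj : injective (@rev_tuple k P).
  by move=> c c' /(congr1 (fun t => rev (val t))); rewrite !revK => /val_inj.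
rewrite -(card_imset _ rev_inj); apply: eq_card => c; rewrite !inE.
apply/imsetP/idP => [[c' ] | c_sorted]; first by rewrite inE => c'_sorted ->; rewrite rev_sorted.
by exists (rev_tuple c); rewrite ?inE ?rev_sorted //; apply: val_inj; rewrite /= revK.
Qed.

Lemma chi_dual : @chi _ P^d = @chi _ P.
Proof. by apply: eq_bigr => k _; rewrite card_Ch_dual. Qed.

Section LeastElement.
Variables (m : P) (m_least : forall x, (m <= x)%O).

Lemma all_least_lt (s : seq P) : all (fun y => m < y)%O s = (m \notin s).
Proof.
apply/allP/idP => [m_lt | m_notin y y_in]; first by apply/negP => /m_lt; rewrite ltxx.
by rewrite lt_neqAle m_least andbT; apply: contraNneq m_notin => ->.
Qed.

Definition Ch_avoid k : {set k.-tuple P} := Ch k :\: [set c : k.-tuple P | m \in c].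

Lemma card_ChS k : #|@Ch _ P k.+1| = (#|Ch_avoid k.+1| + #|Ch_avoid k|)%N.
Proof.
(* A chain through the least element m starts with m. *)
rewrite -(cardsID [set c : k.+1.-tuple P | m \in c] (Ch k.+1)) addnC; congr addn.
have cons_inj : injective (@cons_tuple k P m) by move=> c c' /(congr1 val) [] /val_inj.
rewrite -(card_imset _ cons_inj); apply: eq_card => c.
case/tupleP: c => x c; rewrite !inE /= (path_sortedE lt_trans).
have [<- | neq_mx] := eqVneq m x.
  by rewrite (mem_imset _ _ cons_inj) !inE all_least_lt andbT andbC.
have -> : [tuple of x :: c] \in cons_tuple m @: Ch_avoid k = false.
  by apply/imsetP => -[c' _ /(congr1 val) [x_eq_m _]]; rewrite x_eq_m eqxx in neq_mx.
by apply/negP => /andP [/andP [/allP x_lt _] /x_lt /=]; rewrite le_gtF ?m_least.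
Qed.

Lemma card_Ch_avoid0 : #|Ch_avoid 0| = 1%N.
Proof.
have -> : Ch_avoid 0 = setT by apply/setP => c; rewrite !inE tuple0.
by rewrite cardsT card_tuple.
Qed.

Lemma card_Ch_avoid_card : #|Ch_avoid #|P| | = 0%N.
Proof.
apply/eqP; rewrite cards_eq0; apply/eqP/setP => c; rewrite !inE.
apply/negP => /andP [m_notin c_sorted].
have : (#|c| <= #|predC1 m|)%N.
  apply/subset_leq_card/subsetP => y y_in.
  by rewrite inE; apply: contraNneq m_notin => <-.
have P_gt0 : (0 < #|P|)%N by apply/card_gt0P; exists m.
rewrite (card_uniqP (sorted_uniq lt_trans ltxx c_sorted)) size_tuple cardC1.
by rewrite leqNgt ltn_predL P_gt0.
Qed.

Lemma chi_least : @chi _ P = 1.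
Proof.
rewrite /chi (eq_big_nat _ _ (F2 := fun k =>
  (-1) ^+ k.-1 * (#|Ch_avoid k|%:Z + #|Ch_avoid k.-1|%:Z))) => [|[//|k] _].
  by rewrite sum_alternating_telescope card_Ch_avoid0 card_Ch_avoid_card mulr0 subr0.
by rewrite card_ChS PoszD.
Qed.

End LeastElement.

Lemma Zq_qint1 (h : P -> nat) : is_height h -> (Zq h).[qint 1] = (@chi _ P)%:~R.
Proof.
move=> h_height; rewrite /Zq /chi horner_sum rmorph_sum.
apply: eq_big_nat => k /andP [k_gt0 _].
rewrite horner_sum (eq_bigr (fun _ => (-1) ^+ k.-1)) => [|c]; last first.
  rewrite inE => c_sorted.
  have hc_uniq : uniq (map h c).
    apply: (sorted_uniq ltn_trans ltnn).
    exact: homo_sorted (is_height_homo h_height) _ c_sorted.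
  have hc_size : size (map h c) = k by rewrite size_map size_tuple.
  have hc_neq0 : map h c != [::] by rewrite -size_eq0 hc_size -lt0n.
  have := Epoly_Zq_term hc_uniq hc_neq0; rewrite hc_size => <-.
  by rewrite hornerCM sumnE big_map.
by rewrite sumr_const rmorphM rmorphXn rmorphN1 -mulr_natr.
Qed.

End Poset.

Theorem mainTheorem12 (d : Order.disp_t) (P : finPOrderType d) (h : P -> nat) :
  is_height h ->
  (Zq h).[qint 1] = (@chi d P)%:~R /\
  ((exists m : P, forall x : P, (m <= x)%O) \/ (exists M : P, forall x : P, (x <= M)%O) ->
     (Zq h).[qint 1] = 1).
Proof.
move=> h_height; have Zq1 := Zq_qint1 h_height.
split=> // -[[m m_least] | [M M_greatest]]; rewrite Zq1.
  by rewrite (chi_least m_least).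
by rewrite -chi_dual (@chi_least _ P^d M M_greatest).
Qed.
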